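(* Let $\mathfrak{g}=sl(n)$, $G=GL(n)$ acting by conjugation, and let $r_{BD}$ be any Belavin–Drinfeld $r$-matrix for $sl(n,\overline{\mathbb{K}})$ (with respect to the diagonal Cartan subalgebra and upper triangular Borel). Then $C(r_{BD})\subseteq\mathrm{diag}(n,\overline{\mathbb{K}})$.
   Context: $\mathbb{K}=\mathbb{C}((\hbar))$, $\overline{\mathbb{K}}$ its algebraic closure. For $sl(n)$: Cartan $\mathfrak{h}$ = traceless diagonal matrices, simple roots $\alpha_i=\epsilon_i-\epsilon_{i+1}$ ($1\le i\le n-1$), root vector $e_{\epsilon_i-\epsilon_k}=e_{ik}$ (matrix unit), $\Omega=\sum_{i,k}e_{ik}\otimes e_{ki}-\frac1nI\otimes I$ with Cartan part $\Omega_0$. An admissible triple $(\Gamma_1,\Gamma_2,\tau)$: $\Gamma_1,\Gamma_2\subset\{\alpha_1,\dots,\alpha_{n-1}\}$, $\tau:\Gamma_1\to\Gamma_2$ an isometric bijection with every $\alpha\in\Gamma_1$ having some $\tau^k(\alpha)\notin\Gamma_1$; $\tau$ extended additively. A Belavin–Drinfeld $r$-matrix is $r_{BD}=r_0+\sum_{\alpha>0}e_\alpha\otimes e_{-\alpha}+\sum_{\beta\in(\mathbb{Z}\Gamma_1)^+}\sum_{k\ge1}e_\beta\wedge e_{-\tau^k(\beta)}$ where $r_0\in\mathfrak{h}(\overline{\mathbb{K}})^{\otimes2}$, $r_0+r_0^{21}=\Omega_0$, $(\tau(\alpha)\otimes1+1\otimes\alpha)(r_0)=0$ for $\alpha\in\Gamma_1$.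 $C(r)=\{X\in GL(n,\overline{\mathbb{K}}):(\mathrm{Ad}_X\otimes\mathrm{Ad}_X)(r)=r\}$, and $\mathrm{diag}(n,\overline{\mathbb{K}})$ is the group of invertible diagonal matrices. *)

From HB Require Import structures.
From mathcomp Require Import all_boot all_order all_algebra all_field.
Set Implicit Arguments. Unset Strict Implicit. Unset Printing Implicit Defensive.
Import Order.TTheory GRing.Theory Num.Theory.
Local Open Scope ring_scope.

(* Matrix units: e_{ij} = delta_mx i j (indices 0..n-1).                      *)
(* Elements of gl(n) (x) gl(n) are stored by their coefficients in the basis  *)
(* e_{ij} (x) e_{kl}: the coefficient is at index ((i,j),(k,l)).              *)
(* Simple roots: alpha_m = eps_m - eps_{m+1}, indexed by m : 'I_n with        *)
(* m.+1 < n (0-based version of alpha_1..alpha_{n-1}).                        *)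
(* Elements of the root lattice are stored by their coordinates on the        *)
(* simple roots: c : {ffun 'I_n -> int}, c m = coefficient of alpha_m.        *)

Notation tensor F n := {ffun ('I_n * 'I_n) * ('I_n * 'I_n) -> F}.

Section BD.
Variables (F : fieldType) (n : nat).

Definition tens (A B : 'M[F]_n) : tensor F n :=
  [ffun p : ('I_n * 'I_n) * ('I_n * 'I_n) => A p.1.1 p.1.2 * B p.2.1 p.2.2].

Definition wedge (A B : 'M[F]_n) : tensor F n := tens A B - tens B A.

(* (Ad_X (x) Ad_X)(T): the linear extension of
   A (x) B |-> (X A X^-1) (x) (X B X^-1). *)
Definition Ad2 (X : 'M[F]_n) (T : tensor F n) : tensor F n :=
  let Y := invmx X in
  [ffun p : ('I_n * 'I_n) * ('I_n * 'I_n) =>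
     \sum_(a : 'I_n) \sum_(b : 'I_n) \sum_(c : 'I_n) \sum_(d : 'I_n)
       X p.1.1 a * Y b p.1.2 * X p.2.1 c * Y d p.2.2 * T ((a, b), (c, d))].

Definition Cstab (r : tensor F n) (X : 'M[F]_n) : Prop :=
  X \in unitmx /\ Ad2 X r = r.

Definition simple_idx (m : 'I_n) : bool := (m.+1 < n)%N.

(* eps-coordinates of alpha_m:  alpha_m(e_{ii}) *)
Definition alpha_eps (m i : 'I_n) : int :=
  (i == m :> nat)%:Z - (i == m.+1 :> nat)%:Z.

Definition root_form (a b : 'I_n) : int :=
  \sum_(i : 'I_n) alpha_eps a i * alpha_eps b i.

Definition admissible (G1 G2 : {set 'I_n}) (tau : 'I_n -> 'I_n) : Prop :=
  [/\ {in G1, forall m, simple_idx m},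
      {in G2, forall m, simple_idx m},
      {in G1 &, injective tau} /\
      tau @: G1 = G2,
      {in G1 &, forall a b, root_form (tau a) (tau b) = root_form a b}
    & {in G1, forall a, exists k, iter k tau a \notin G1}].

(* the positive root eps_i - eps_j (i < j) = alpha_i + ... + alpha_{j-1},
   in simple-root coordinates *)
Definition posroot (i j : 'I_n) : {ffun 'I_n -> int} :=
  [ffun m : 'I_n => ((i <= m)%N && (m < j)%N)%:Z].

Definition in_lattice (G1 : {set 'I_n}) (c : {ffun 'I_n -> int}) : bool :=
  [forall m, (c m != 0) ==> (m \in G1)].

(* additive extension of tau to Z Gamma1 *)
Definition tau_ext (G1 : {set 'I_n}) (tau : 'I_n -> 'I_n)
    (c : {ffun 'I_n -> int}) : {ffun 'I_n -> int} :=
  [ffun m' : 'I_n => \sum_(m in G1 | tau m == m') c m].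

(* tau^k(c), defined (Some _) iff c, tau c, ..., tau^{k-1} c lie in Z Gamma1 *)
Fixpoint tau_pow (G1 : {set 'I_n}) (tau : 'I_n -> 'I_n) (k : nat)
    (c : {ffun 'I_n -> int}) : option {ffun 'I_n -> int} :=
  match k with
  | 0 => Some c
  | k'.+1 =>
      match tau_pow G1 tau k' c with
      | Some d => if in_lattice G1 d then Some (tau_ext G1 tau d) else None
      | None => None
      end
  end.

(* root vector e_{-gamma} for a positive root gamma = eps_p - eps_q (p < q):
   e_{-gamma} = e_{qp} (zero if gamma is not a positive root) *)
Definition e_neg (g : {ffun 'I_n -> int}) : 'M[F]_n :=
  \sum_(p : 'I_n) \sum_(q : 'I_n | (p < q)%N && (posroot p q == g))
     delta_mx q p.

(* Conditions on r_0 = \sum_{i,j} R0 i j e_{ii} (x) e_{jj}: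
   r_0 in h (x) h (h = traceless diagonal matrices),
   r_0 + r_0^{21} = Omega_0 = \sum_i e_{ii} (x) e_{ii} - 1/n I (x) I,
   (tau(alpha) (x) 1 + 1 (x) alpha)(r_0) = 0 for alpha in Gamma1. *)
Definition r0_ok (G1 : {set 'I_n}) (tau : 'I_n -> 'I_n) (R0 : 'M[F]_n) : Prop :=
  [/\ (forall j, \sum_(i : 'I_n) R0 i j = 0),
      (forall i, \sum_(j : 'I_n) R0 i j = 0),
      (forall i j, R0 i j + R0 j i = (i == j)%:R - n%:R^-1)
    & {in G1, forall m, forall l : 'I_n,
        \sum_(i : 'I_n) R0 i l * (alpha_eps (tau m) i)%:~R
        + \sum_(j : 'I_n) R0 l j * (alpha_eps m j)%:~R = 0}].

Definition r0_tensor (R0 : 'M[F]_n) : tensor F n :=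
  \sum_(i : 'I_n) \sum_(j : 'I_n) tens (R0 i j *: delta_mx i i) (delta_mx j j).

(* r_BD = r_0 + sum_{alpha>0} e_alpha (x) e_{-alpha}
          + sum_{beta in (Z Gamma1)^+} sum_{k>=1} e_beta /\ e_{-tau^k(beta)}.
   tau^k(beta) is undefined for k >= n (it needs |Gamma1| >= k), so the
   inner sum over k is taken over 1 <= k <= n. *)
Definition rBD (G1 : {set 'I_n}) (tau : 'I_n -> 'I_n) (R0 : 'M[F]_n) : tensor F n :=
  r0_tensor R0
  + \sum_(i : 'I_n) \sum_(j : 'I_n | (i < j)%N) tens (delta_mx i j) (delta_mx j i)
  + \sum_(i : 'I_n) \sum_(j : 'I_n | ((i < j)%N && in_lattice G1 (posroot i j)))
      \sum_(1 <= k < n.+1)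
        match tau_pow G1 tau k (posroot i j) with
        | Some g => wedge (delta_mx i j) (e_neg g)
        | None => 0
        end.

End BD.

Lemma Ad2_tens (F : fieldType) n (X A B : 'M[F]_n) :
  Ad2 X (tens A B) = tens (X *m A *m invmx X) (X *m B *m invmx X).
Proof.
apply/ffunP => -[[i j] [k l]]; rewrite !ffunE /=.
set Y := invmx X.
rewrite !mxE big_distrl /=.
under [in RHS]eq_bigr => b _ do rewrite mxE !big_distrl /=.
rewrite [in RHS]exchange_big /=; apply: eq_bigr => a _.
apply: eq_bigr => b _.
rewrite big_distrr /=.
under [in RHS]eq_bigr => d _ do rewrite mxE !big_distrl !big_distrr /=.
rewrite [in RHS]exchange_big /=; apply: eq_bigr => c _.
apply: eq_bigr => d _.
rewrite ffunE /=.
rewrite -!mulrA; congr (_ * _).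
rewrite [B c d * _]mulrC [RHS]mulrCA (mulrCA (A a b)) (mulrCA (A a b)).
by [].
Qed.

From HB Require Import structures.
From mathcomp Require Import all_boot all_order all_algebra all_field.
From mathcomp Require Import zify ring.
Set Implicit Arguments. Unset Strict Implicit. Unset Printing Implicit Defensive.
Import Order.TTheory GRing.Theory Num.Theory.
Local Open Scope ring_scope.

(* A tensor T in gl(n) (x) gl(n) defines the contraction operator
     R_T(Y)_{ab} = \sum_{c,d} T_{ab,cd} Y_{dc}    (R_{A (x) B}(Y) = A tr(BY)),
   and R_T commutes with Ad_X for every X in C(T).  For T = r_BD:
   - R_{r_0}(Y) only depends on the diagonal of Y;
   - \sum_{a<b} e_{ab} (x) e_{ba} contracts to the projection onto n+;
   - the Belavin-Drinfeld part pairs e_{+-beta} with e_{-+tau^k(beta)},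
     k >= 1, and tau-chains of positive roots are finite by admissibility.
   Measuring a root by the length of its tau-chain (its depth), R_T is
   nilpotent on n- and R_T - 1 is nilpotent on n+.  For X in C(r_BD) and
   a < b, z = X e_{ab} X^-1 is killed by a power of R_T - 1; so is its
   strictly lower part, which is also killed by a power of R_T, hence
   vanishes; z^2 = 0 then kills the diagonal of z.  So Ad_X preserves n+ and
   likewise Ad_{X^-1} preserves n-; a matrix normalising n+ (resp. whose
   inverse normalises n-) is upper (resp. lower) triangular, so X is
   diagonal. *)

Lemma delta_mx_neq0 (R : nzRingType) m k (i : 'I_m) (j : 'I_k) a b :
  delta_mx i j a b != 0 :> R -> a = i /\ b = j.
Proof.
by rewrite mxE; case: (a =P i) => [->|]; case: (b =P j) => [->|] //; rewrite /= eqxx.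
Qed.

Lemma mul_neq0 (R : idomainType) (x y : R) : x * y != 0 -> x != 0 /\ y != 0.
Proof. by rewrite mulf_eq0 negb_or => /andP. Qed.

Lemma add_neq0 (R : zmodType) (x y : R) : x + y != 0 -> x != 0 \/ y != 0.
Proof. by case: (eqVneq x 0) => [->|]; [rewrite add0r; right | left]. Qed.

Lemma sum_neq0P (R : zmodType) (I : eqType) (r : seq I) (Q : pred I)
    (f : I -> R) (P : Prop) :
  (forall i, i \in r -> Q i -> f i != 0 -> P) -> \sum_(i <- r | Q i) f i != 0 -> P.
Proof.
elim: r => [|x r IH] H; first by rewrite big_nil eqxx.
have Hr : forall i, i \in r -> Q i -> f i != 0 -> P.
  by move=> i ir; apply: H; rewrite inE ir orbT.
rewrite big_cons; case: ifP => Qx; last exact: IH.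
case/add_neq0 => [fx|]; last exact: IH.
by apply: (H x) => //; rewrite inE eqxx.
Qed.

Lemma iter_comm (T : Type) (f g : T -> T) k x :
  (forall y, f (g y) = g (f y)) -> iter k f (g x) = g (iter k f x).
Proof. by move=> fg; elim: k => //= k ->; rewrite fg. Qed.

(* For an additive endomorphism A, ker A^a and ker (A - 1)^b meet trivially
   (the polynomials X^a and (X - 1)^b are coprime). *)
Lemma iter_kernels_coprime (V : zmodType) (A : V -> V) :
  (forall x y, A (x - y) = A x - A y) ->
  forall a b w, iter a A w = 0 -> iter b (fun v => A v - v) w = 0 -> w = 0.
Proof.
move=> AB; set S := fun v => A v - v.
have A0 : A 0 = 0 by move: (AB 0 0); rewrite !subrr.
have S0 : S 0 = 0 by rewrite /S A0 subrr.
have AS y : A (S y) = S (A y) by rewrite /S AB.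
elim=> [|a IHa] b w; first by move=> /= ->.
elim: b w => [|b IHb] w; first by move=> _ /= ->.
move=> Haw Hbw.
have Aw : A w = 0.
  apply: (IHa b.+1); first by rewrite -iterSr.
  by rewrite (iter_comm _ _ (fun y => esym (AS y))) Hbw A0.
have Sw : S w = 0.
  apply: IHb; last by rewrite -iterSr.
  by rewrite (iter_comm _ _ AS) Haw S0.
by move: Sw; rewrite /S Aw sub0r => /eqP; rewrite oppr_eq0 => /eqP.
Qed.

Section Triangular.
Variables (R : comNzRingType) (n : nat).

Definition strictly_upper (A : 'M[R]_n) : Prop :=
  forall i j : 'I_n, (j <= i)%N -> A i j = 0.
Definition strictly_lower (A : 'M[R]_n) : Prop :=
  forall i j : 'I_n, (i <= j)%N -> A i j = 0.

Lemma strictly_upper_tr (A : 'M[R]_n) : strictly_upper A^T <-> strictly_lower A.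
Proof. by split=> HA i j ij; [have := HA j i ij | ]; rewrite mxE // HA. Qed.

(* A matrix P with inverse Q such that Ad_P maps n+ into n+ is upper
   triangular: descending induction on the row index, comparing the diagonal
   entries of (P e_{dc} Q) P = P e_{dc}. *)
Lemma normaliser_nplus_upper (P Q : 'M[R]_n) :
  Q *m P = 1 ->
  (forall a b : 'I_n, (a < b)%N -> strictly_upper (P *m delta_mx a b *m Q)) ->
  is_trig_mx P^T.
Proof.
move=> QP HP; apply/is_trig_mxP => j i ij; rewrite mxE.
suff low k (c d : 'I_n) : (n - k <= c)%N -> (d < c)%N -> P c d = 0.
  by apply: (low n); rewrite ?subnn.
elim: k c d => [|k IHk] c d Hc dc.
  by move: (ltn_ord c); rewrite ltnNge; move: Hc; rewrite subn0 => ->.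
have E : (P *m delta_mx d c *m Q) *m P = P *m delta_mx d c.
  by rewrite -mulmxA QP mulmx1.
have := congr1 (fun M : 'M[R]_n => M c c) E; rewrite mxE [RHS]mxE.
have -> : \sum_j P c j * delta_mx d c j c = P c d.
  rewrite (bigD1 d) //= big1 ?addr0 => [|e ed]; first by rewrite mxE !eqxx mulr1.
  by rewrite mxE (negbTE ed) mulr0.
move=> <-; apply: big1 => e _.
case: (leqP e c) => ec; first by rewrite (HP d c dc c e ec) mul0r.
by rewrite (IHk e c) ?mulr0 //; lia.
Qed.

Lemma normaliser_nminus_lower (P Q : 'M[R]_n) :
  P *m Q = 1 ->
  (forall a b : 'I_n, (b < a)%N -> strictly_lower (Q *m delta_mx a b *m P)) ->
  is_trig_mx P.
Proof.
move=> PQ HQ; rewrite -[P]trmxK.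
apply: (normaliser_nplus_upper (Q := Q^T)); first by rewrite -trmx_mul PQ trmx1.
move=> a b ab; rewrite -trmx_delta -!trmx_mul mulmxA.
by apply/strictly_upper_tr; apply: HQ.
Qed.

End Triangular.

Lemma sqr0_trig_diag (R : idomainType) n (z : 'M[R]_n) c :
  z *m z = 0 -> is_trig_mx z -> z c c = 0.
Proof.
move=> zz /is_trig_mxP zt.
have : (z *m z) c c = z c c * z c c.
  rewrite mxE (bigD1 c) //= big1 ?addr0 // => e ec.
  case: (ltngtP e c) => H; last by move/val_inj: H ec => ->; rewrite eqxx.
  - by rewrite (zt e c H) mulr0.
  - by rewrite (zt c e H) mul0r.
by rewrite zz mxE => /esym /eqP; rewrite mulf_eq0 orbb => /eqP.
Qed.

Section TauChains.
Variables (n : nat) (G1 : {set 'I_n}) (tau : 'I_n -> 'I_n).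

Lemma tau_pow_add k K c :
  tau_pow G1 tau (k + K) c = obind (tau_pow G1 tau K) (tau_pow G1 tau k c).
Proof.
elim: K => [|K IH] /=; first by rewrite addn0; case: (tau_pow _ _ _ _).
by rewrite addnS /= IH; case: (tau_pow G1 tau k c).
Qed.

(* Along a tau-chain of a nonnegative c with c_{m0} > 0, the coefficient at
   tau^K(m0) stays positive; hence tau^K(c) is defined only if
   m0, tau(m0), ..., tau^{K-1}(m0) all lie in Gamma1. *)
Lemma tau_chain_in_G1 (c : {ffun 'I_n -> int}) m0 :
  (forall m, 0 <= c m) -> 0 < c m0 ->
  forall K g, tau_pow G1 tau K c = Some g ->
  [/\ forall m, 0 <= g m, 0 < g (iter K tau m0) &
      forall t, (t < K)%N -> iter t tau m0 \in G1].
Proof.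
move=> c0 cm0; elim=> [|K IH] g /=; first by case=> <-.
case E: (tau_pow G1 tau K c) => [d|] //.
case L: (in_lattice G1 d) => //= -[<-].
have [d0 dm Hch] := IH d E.
have inG : iter K tau m0 \in G1.
  by move/forallP: L => /(_ (iter K tau m0)) /implyP; apply; rewrite gt_eqF.
split.
- by move=> m; rewrite ffunE; apply: sumr_ge0 => i _; exact: d0.
- rewrite ffunE (bigD1 (iter K tau m0)) /=; last by rewrite inG eqxx.
  by apply: (lt_le_trans dm); rewrite lerDl; apply: sumr_ge0 => i _; exact: d0.
- by move=> t; rewrite ltnS leq_eqVlt => /orP [/eqP -> //|]; exact: Hch.
Qed.

Definition exits_within (K0 : nat) : Prop :=
  forall m : 'I_n, exists2 t, (t < K0)%N & iter t tau m \notin G1.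

Lemma tau_exit_bound :
  {in G1, forall a, exists k, iter k tau a \notin G1} -> exists K0, exits_within K0.
Proof.
move=> Hex.
suff [K0 HK0] : exists K0, forall m, m \in enum 'I_n ->
    exists2 t, (t < K0)%N & iter t tau m \notin G1.
  by exists K0 => m; apply: HK0; rewrite mem_enum.
elim: (enum 'I_n) => [|m s [K0 HK0]]; first by exists 0%N.
have [t Ht] : exists t, iter t tau m \notin G1.
  by case: (boolP (m \in G1)) => Hm; [exact: Hex | exists 0%N].
exists (maxn K0 t.+1) => m'; rewrite inE => /orP [/eqP ->|Hm'].
  by exists t; rewrite // leq_max ltnSn orbT.
by have [t' Ht' H'] := HK0 m' Hm'; exists t'; rewrite // leq_max Ht'.
Qed.

Section Depth.
Variable K0 : nat.
Hypothesis tau_exit : exits_within K0.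

Lemma posroot_chain_bound (i j : 'I_n) K g :
  (i < j)%N -> tau_pow G1 tau K (posroot i j) = Some g -> (K < K0)%N.
Proof.
move=> ij Hg.
have c0 m : 0 <= posroot i j m by rewrite ffunE.
have ci : 0 < posroot i j i by rewrite ffunE leqnn ij.
have [_ _ Hch] := tau_chain_in_G1 c0 ci Hg.
have [t Ht Hn] := tau_exit i.
by rewrite ltnNge; apply: contra Hn => HK; rewrite Hch // (leq_trans Ht HK).
Qed.

Definition depth (c : {ffun 'I_n -> int}) : nat :=
  \max_(K < K0 | tau_pow G1 tau K c != None) K.

Lemma depth_le c : (depth c <= K0)%N.
Proof. by apply/bigmax_leqP => K _; apply: ltnW. Qed.

Lemma depth_ge c K g : tau_pow G1 tau K c = Some g -> (K < K0)%N ->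
  (K <= depth c)%N.
Proof.
move=> Hg KK0.
by apply: (@leq_bigmax_cond _ _ (fun K : 'I_K0 => nat_of_ord K) (Ordinal KK0)); rewrite /= Hg.
Qed.

Lemma depth_tau_lt (i j : 'I_n) k g :
  (i < j)%N -> (0 < k)%N -> tau_pow G1 tau k (posroot i j) = Some g ->
  (depth g < depth (posroot i j))%N.
Proof.
move=> ij k0 Hg.
have kD := depth_ge Hg (posroot_chain_bound ij Hg).
suff : (depth g <= depth (posroot i j) - k)%N by lia.
apply/bigmax_leqP => K; case E: (tau_pow G1 tau K g) => [g'|] // _.
have E' : tau_pow G1 tau (k + K) (posroot i j) = Some g' by rewrite tau_pow_add Hg.
have := depth_ge E' (posroot_chain_bound ij E'); lia.
Qed.

End Depth.
End TauChains.

Section Contraction.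
Variables (F : fieldType) (n : nat).

Definition contract (T : tensor F n) (Y : 'M[F]_n) : 'M[F]_n :=
  \matrix_(a, b) \sum_(c : 'I_n) \sum_(d : 'I_n) T ((a, b), (c, d)) * Y d c.

Lemma contractB T Y1 Y2 : contract T (Y1 - Y2) = contract T Y1 - contract T Y2.
Proof.
apply/matrixP => a b; rewrite !mxE -sumrB; apply: eq_bigr => c _.
by rewrite -sumrB; apply: eq_bigr => d _; rewrite !mxE mulrBr.
Qed.

Lemma contractD T1 T2 Y : contract (T1 + T2) Y = contract T1 Y + contract T2 Y.
Proof.
apply/matrixP => a b; rewrite !mxE -big_split; apply: eq_bigr => c _.
by rewrite -big_split; apply: eq_bigr => d _; rewrite ffunE mulrDl.
Qed.

Lemma contract_Ad (X : 'M[F]_n) T W :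
  contract (Ad2 X T) W = X *m contract T (invmx X *m W *m X) *m invmx X.
Proof.
set Z := invmx X.
apply/matrixP => a b; rewrite !mxE.
transitivity (\sum_(a' : 'I_n) \sum_(b' : 'I_n) \sum_(c' : 'I_n) \sum_(d' : 'I_n)
   \sum_(c : 'I_n) \sum_(d : 'I_n)
   X a a' * Z b' b * X c c' * Z d' d * T ((a', b'), (c', d')) * W d c).
  under eq_bigr => c _ do under eq_bigr => d _ do rewrite ffunE /=.
  do 4! (under eq_bigr => ? _ do under eq_bigr => ? _ do rewrite big_distrl;
    under eq_bigr => ? _ do rewrite exchange_big; rewrite [LHS]exchange_big;
    apply: eq_bigr => ? _).
  by [].
under [RHS]eq_bigr => j _ do rewrite mxE big_distrl.
rewrite [RHS]exchange_big; apply: eq_bigr => a' _; apply: eq_bigr => b' _ /=.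
rewrite mxE big_distrr big_distrl; apply: eq_bigr => c' _ /=.
rewrite big_distrr big_distrl; apply: eq_bigr => d' _ /=.
rewrite mxE big_distrr big_distrr big_distrl; apply: eq_bigr => c _ /=.
rewrite mxE big_distrl !big_distrr big_distrl; apply: eq_bigr => d _ /=.
ring.
Qed.

Lemma contract_conj (X : 'M[F]_n) T :
  X \in unitmx -> Ad2 X T = T ->
  (forall W, contract T (X *m W *m invmx X) = X *m contract T W *m invmx X) /\
  (forall W, contract T (invmx X *m W *m X) = invmx X *m contract T W *m X).
Proof.
move=> Xu HT; split => W.
  have := contract_Ad X T (X *m W *m invmx X); rewrite HT => ->.
  by rewrite !mulmxA (mulVmx Xu) mul1mx -(mulmxA W) (mulVmx Xu) mulmx1.
have := contract_Ad X T W; rewrite HT => ->.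
by rewrite !mulmxA (mulVmx Xu) mul1mx -[RHS]mulmxA (mulVmx Xu) mulmx1.
Qed.

Definition lower_part (Y : 'M[F]_n) : 'M[F]_n :=
  \matrix_(a, b) if (b < a)%N then Y a b else 0.
Definition upper_part (Y : 'M[F]_n) : 'M[F]_n :=
  \matrix_(a, b) if (a < b)%N then Y a b else 0.

Lemma lower_partB Y1 Y2 : lower_part (Y1 - Y2) = lower_part Y1 - lower_part Y2.
Proof. by apply/matrixP => a b; rewrite !mxE; case: ifP; rewrite ?subr0. Qed.

Definition triangular_support (T : tensor F n) : Prop :=
  forall a b c d : 'I_n, T ((a, b), (c, d)) != 0 ->
    ((b < a)%N = (c < d)%N) /\ ((a < b)%N = (d < c)%N).

Lemma triangular_supportD T1 T2 :
  triangular_support T1 -> triangular_support T2 -> triangular_support (T1 + T2).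
Proof. by move=> H1 H2 a b c d; rewrite ffunE => /add_neq0 [/H1|/H2]. Qed.

Lemma lower_part_contract T Y : triangular_support T ->
  lower_part (contract T Y) = contract T (lower_part Y).
Proof.
move=> HT; apply/matrixP => a b; rewrite !mxE.
case: ifP => ba; [|symmetry; apply: big1 => c _; apply: big1 => d _];
  [apply: eq_bigr => c _; apply: eq_bigr => d _|]; rewrite mxE;
  (have [->|/HT [<- _]] := eqVneq (T ((a, b), (c, d))) 0; [by rewrite !mul0r|]);
  by rewrite ba ?mulr0.
Qed.

Lemma upper_part_contract T Y : triangular_support T ->
  upper_part (contract T Y) = contract T (upper_part Y).
Proof.
move=> HT; apply/matrixP => a b; rewrite !mxE.
case: ifP => ab; [|symmetry; apply: big1 => c _; apply: big1 => d _];
  [apply: eq_bigr => c _; apply: eq_bigr => d _|]; rewrite mxE;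
  (have [->|/HT [_ <-]] := eqVneq (T ((a, b), (c, d))) 0; [by rewrite !mul0r|]);
  by rewrite ab ?mulr0.
Qed.

End Contraction.

Section BDCoefficients.
Variables (F : fieldType) (n : nat) (G1 : {set 'I_n}) (tau : 'I_n -> 'I_n).
Variable R0 : 'M[F]_n.

Definition standard_part : tensor F n :=
  \sum_(i : 'I_n) \sum_(j : 'I_n | (i < j)%N) tens (delta_mx i j) (delta_mx j i).

Definition bd_part : tensor F n :=
  \sum_(i : 'I_n) \sum_(j : 'I_n | ((i < j)%N && in_lattice G1 (posroot i j)))
      \sum_(1 <= k < n.+1)
        match tau_pow G1 tau k (posroot i j) with
        | Some g => wedge (delta_mx i j) (e_neg F g)
        | None => 0
        end.

Lemma rBD_split : rBD G1 tau R0 = r0_tensor R0 + standard_part + bd_part.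
Proof. by []. Qed.

Lemma e_neg_entry g (x y : 'I_n) :
  e_neg F g x y != 0 -> (y < x)%N /\ posroot y x = g.
Proof.
rewrite /e_neg summxE; apply: sum_neq0P => p _ _.
rewrite summxE; apply: sum_neq0P => q _ /andP [pq /eqP pg].
by case/delta_mx_neq0 => -> ->.
Qed.

Lemma r0_coef (a b c d : 'I_n) :
  r0_tensor R0 ((a, b), (c, d)) != 0 -> a = b /\ c = d.
Proof.
rewrite /r0_tensor sum_ffunE; apply: sum_neq0P => i _ _.
rewrite sum_ffunE; apply: sum_neq0P => j _ _.
rewrite ffunE /= mxE => /mul_neq0 [/mul_neq0 [_ /delta_mx_neq0 [-> ->]]].
by case/delta_mx_neq0 => -> ->.
Qed.

Lemma standard_coef (a b c d : 'I_n) :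
  standard_part ((a, b), (c, d)) = ((a < b)%N && (c == b) && (d == a))%:R.
Proof.
rewrite /standard_part sum_ffunE (bigD1 a) //= [X in _ + X]big1 ?addr0; last first.
  move=> i ia; rewrite sum_ffunE big1 // => j _.
  by rewrite ffunE !mxE /= eq_sym (negbTE ia) /= mul0r.
rewrite sum_ffunE; case: (ltnP a b) => ab /=.
  rewrite (bigD1 b) //= [X in _ + X]big1 ?addr0; last first.
    by move=> j /andP [_ jb]; rewrite ffunE !mxE /= eqxx /= eq_sym (negbTE jb) /= mul0r.
  by rewrite ffunE !mxE /= !eqxx /= mul1r; case: (c == b); case: (d == a).
apply: big1 => j aj; rewrite ffunE !mxE /=.
case: (eqVneq b j) => [bj|]; last by rewrite andbF /= mul0r.
by move: ab; rewrite bj => /(leq_trans aj); rewrite ltnn.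
Qed.

Lemma bd_coef (a b c d : 'I_n) :
  bd_part ((a, b), (c, d)) != 0 ->
  ((a < b)%N /\ (d < c)%N /\
      exists2 k, (0 < k)%N & tau_pow G1 tau k (posroot a b) = Some (posroot d c))
  \/ ((b < a)%N /\ (c < d)%N /\
      exists2 k, (0 < k)%N & tau_pow G1 tau k (posroot c d) = Some (posroot b a)).
Proof.
rewrite /bd_part sum_ffunE; apply: sum_neq0P => i _ _.
rewrite sum_ffunE; apply: sum_neq0P => j _ /andP [ij _].
rewrite sum_ffunE; apply: sum_neq0P => k; rewrite mem_index_iota => /andP [k1 _] _.
case E: (tau_pow G1 tau k (posroot i j)) => [g|]; last by rewrite ffunE eqxx.
rewrite !ffunE /= => /add_neq0 [|]; last rewrite oppr_eq0.
- case/mul_neq0 => /delta_mx_neq0 [-> ->] /e_neg_entry [dc Hg].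
  by left; do 2!split=> //; exists k; rewrite // E Hg.
- case/mul_neq0 => /e_neg_entry [ba Hg] /delta_mx_neq0 [-> ->].
  by right; do 2!split=> //; exists k; rewrite // E Hg.
Qed.

Lemma rBD_triangular_support : triangular_support (rBD G1 tau R0).
Proof.
rewrite rBD_split; apply: triangular_supportD; first apply: triangular_supportD.
- by move=> a b c d /r0_coef [-> ->]; rewrite !ltnn.
- move=> a b c d; rewrite standard_coef.
  case: (ltnP a b) => [ab|]; last by rewrite mulr0n eqxx.
  case: (c =P b) => [->|]; last by rewrite andbF mulr0n eqxx.
  by case: (d =P a) => [-> _|]; last rewrite mulr0n eqxx.
- move=> a b c d /bd_coef [[ab [dc _]]|[ba [cd _]]].
  + by rewrite ab dc ltnNge (ltnW ab) ltnNge (ltnW dc).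
  + by rewrite ba cd ltnNge (ltnW ba) ltnNge (ltnW cd).
Qed.

Lemma contract_r0 (Y : 'M[F]_n) :
  (forall a, Y a a = 0) -> contract (r0_tensor R0) Y = 0.
Proof.
move=> Y0; apply/matrixP => a b; rewrite !mxE; apply: big1 => c _; apply: big1 => d _.
by have [->|/r0_coef [_ ->]] := eqVneq (r0_tensor R0 ((a, b), (c, d))) 0;
  rewrite ?mul0r ?Y0 ?mulr0.
Qed.

Lemma contract_standard (Y : 'M[F]_n) : contract standard_part Y = upper_part Y.
Proof.
apply/matrixP => a b; rewrite !mxE (bigD1 b) //= [X in _ + X]big1 ?addr0; last first.
  by move=> c cb; apply: big1 => d _; rewrite standard_coef (negbTE cb) andbF mul0r.
rewrite (bigD1 a) //= [X in _ + X]big1 ?addr0; last first.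
  by move=> d da; rewrite standard_coef (negbTE da) andbF mul0r.
by rewrite standard_coef !eqxx !andbT; case: ltnP; rewrite ?mul1r ?mul0r.
Qed.

Lemma contract_rBD (Y : 'M[F]_n) : (forall a, Y a a = 0) ->
  contract (rBD G1 tau R0) Y = upper_part Y + contract bd_part Y.
Proof.
by move=> Y0; rewrite rBD_split !contractD contract_r0 // contract_standard add0r.
Qed.

End BDCoefficients.

Lemma conj_delta_sqr0 (R : nzRingType) n (P Q : 'M[R]_n) (a b : 'I_n) :
  Q *m P = 1 -> a != b ->
  (P *m delta_mx a b *m Q) *m (P *m delta_mx a b *m Q) = 0.
Proof.
move=> QP ab; rewrite -!mulmxA (mulmxA Q) QP mul1mx (mulmxA (delta_mx a b)).
by rewrite mul_delta_mx_cond eq_sym (negbTE ab) mulr0n !(mul0mx, mulmx0).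
Qed.

Section Nilpotency.
Variables (F : fieldType) (n : nat) (G1 : {set 'I_n}) (tau : 'I_n -> 'I_n).
Variables (R0 : 'M[F]_n) (K0 : nat).
Hypothesis tau_exit : exits_within G1 tau K0.

Let R := contract (rBD G1 tau R0).
Let S := fun Y : 'M[F]_n => R Y - Y.
Let D (p q : 'I_n) := depth G1 tau K0 (posroot p q).

Definition lower_depth d (Y : 'M[F]_n) : Prop :=
  forall a b, Y a b != 0 -> (b < a)%N /\ (D b a < d)%N.

Definition upper_depth d (Y : 'M[F]_n) : Prop :=
  forall a b, Y a b != 0 -> (a < b)%N /\ (d <= D a b)%N.

(* R_{r_BD} lowers the depth of lower root vectors, R_{r_BD} - 1 raises the
   depth of upper ones: on n+-/- it acts through R_{bd}, which moves a root
   along its tau-chain. *)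
Lemma lower_depth_step d Y : lower_depth d.+1 Y -> lower_depth d (R Y).
Proof.
move=> HY.
have Y0 a : Y a a = 0 by apply/eqP/negP => /negP /HY []; rewrite ltnn.
have Yu : upper_part Y = 0.
  apply/matrixP => a b; rewrite !mxE; case: ifP => // ab.
  by apply/eqP/negP => /negP /HY [ba _]; move: (ltn_trans ab ba); rewrite ltnn.
move=> a b; rewrite /R contract_rBD // Yu add0r mxE.
apply: sum_neq0P => c _ _; apply: sum_neq0P => d' _ _ /mul_neq0 [HT /HY [cd HD]].
case/bd_coef: HT => [[_ [dc _]]|[ba [_ [k k0 E]]]].
- by move: (ltn_trans cd dc); rewrite ltnn.
- by split=> //; apply: leq_trans (depth_tau_lt tau_exit cd k0 E) HD.
Qed.

Lemma upper_depth_step d Y : upper_depth d Y -> upper_depth d.+1 (S Y).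
Proof.
move=> HY.
have Y0 a : Y a a = 0 by apply/eqP/negP => /negP /HY []; rewrite ltnn.
have Yu : upper_part Y = Y.
  apply/matrixP => a b; rewrite !mxE; case: ifP => // /negbT ab.
  by apply/esym/eqP; apply: contraNT ab => /HY [].
move=> a b; rewrite /S /R contract_rBD // Yu addrAC subrr add0r mxE.
apply: sum_neq0P => c _ _; apply: sum_neq0P => d' _ _ /mul_neq0 [HT /HY [dc HD]].
case/bd_coef: HT => [[ab [_ [k k0 E]]]|[_ [cd _]]].
- by split=> //; apply: leq_ltn_trans HD (depth_tau_lt tau_exit ab k0 E).
- by move: (ltn_trans dc cd); rewrite ltnn.
Qed.

Lemma contract_nilpotent_lower Y : strictly_lower Y -> iter K0.+1 R Y = 0.
Proof.
move=> HY.
suff nil d Y' : lower_depth d Y' -> iter d R Y' = 0.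
  apply: nil => a b Yab; rewrite ltnS depth_le ltnNge.
  by split=> //; apply: contra Yab => /HY ->.
elim: d Y' => [|d IH] Y' HY'; last by rewrite iterSr; apply/IH/lower_depth_step.
by apply/matrixP => a b; rewrite mxE /=; apply/eqP/negP => /negP /HY' [_].
Qed.

Lemma contract_unipotent_upper Y : strictly_upper Y -> iter K0.+1 S Y = 0.
Proof.
move=> HY.
suff nil m Y' : upper_depth (K0.+1 - m) Y' -> iter m S Y' = 0.
  apply: nil => a b Yab; rewrite subnn ltnNge.
  by split=> //; apply: contra Yab => /HY ->.
elim: m Y' => [|m IH] Y' HY'.
  apply/matrixP => a b; rewrite mxE /=; apply/eqP/negP => /negP /HY' [_].
  by rewrite subn0 leqNgt ltnS depth_le.
rewrite iterSr; apply: IH => a b /(upper_depth_step HY') [ab Hd].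
by split=> //; apply: leq_trans Hd; lia.
Qed.

Lemma lower_part_S Y : lower_part (S Y) = S (lower_part Y).
Proof. by rewrite /S /R lower_partB lower_part_contract //; exact: rBD_triangular_support. Qed.

Lemma upper_part_R Y : upper_part (R Y) = R (upper_part Y).
Proof. by rewrite /R upper_part_contract //; exact: rBD_triangular_support. Qed.

Section Conjugation.
Variables (P Q : 'M[F]_n).
Hypotheses (QP : Q *m P = 1) (R_conj : forall W, R (P *m W *m Q) = P *m R W *m Q).

Let S_conj W : S (P *m W *m Q) = P *m S W *m Q.
Proof. by rewrite /S R_conj mulmxBr mulmxBl. Qed.

(* If R commutes with Ad_P then Ad_P maps n+ into n+: the strictly lower
   part of z = P e_{ab} P^-1 is killed by powers of both R and R - 1. *)
Lemma conj_nplus (a b : 'I_n) : (a < b)%N -> strictly_upper (P *m delta_mx a b *m Q).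
Proof.
move=> ab; set z := P *m delta_mx a b *m Q.
have Sz : iter K0.+1 S z = 0.
  rewrite /z (iter_comm _ _ S_conj) contract_unipotent_upper ?mulmx0 ?mul0mx //.
  by move=> c d dc; rewrite mxE; case: (c =P a) => [ca|]; case: (d =P b) => [db|] //;
    move: dc; rewrite ca db leqNgt ab.
have Lz : lower_part z = 0.
  apply: (iter_kernels_coprime (contractB _) (a := K0.+1) (b := K0.+1)).
    by apply: contract_nilpotent_lower => c d cd; rewrite mxE ltnNge cd.
  rewrite (iter_comm _ _ (fun y => esym (lower_part_S y))) Sz.
  by apply/matrixP => c d; rewrite !mxE; case: ifP.
have zl (c d : 'I_n) : (d < c)%N -> z c d = 0.
  by move=> dc; have := congr1 (fun M : 'M[F]_n => M c d) Lz; rewrite !mxE dc.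
move=> c d; rewrite leq_eqVlt => /orP [/eqP/val_inj <-|]; last exact: zl.
have zzT : z^T *m z^T = 0 by rewrite -trmx_mul conj_delta_sqr0 ?trmx0 // neq_ltn ab.
have zT : is_trig_mx z^T by apply/is_trig_mxP => i j ij; rewrite mxE zl.
by have := sqr0_trig_diag d zzT zT; rewrite mxE.
Qed.

Lemma conj_nminus (a b : 'I_n) : (b < a)%N -> strictly_lower (P *m delta_mx a b *m Q).
Proof.
move=> ba; set z := P *m delta_mx a b *m Q.
have Rz : iter K0.+1 R z = 0.
  rewrite /z (iter_comm _ _ R_conj) contract_nilpotent_lower ?mulmx0 ?mul0mx //.
  by move=> c d cd; rewrite mxE; case: (c =P a) => [ca|]; case: (d =P b) => [db|] //;
    move: cd; rewrite ca db leqNgt ba.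
have Uz : upper_part z = 0.
  apply: (iter_kernels_coprime (contractB _) (a := K0.+1) (b := K0.+1)); last first.
    by apply: contract_unipotent_upper => c d dc; rewrite mxE ltnNge dc.
  rewrite (iter_comm _ _ (fun y => esym (upper_part_R y))) Rz.
  by apply/matrixP => c d; rewrite !mxE; case: ifP.
have zu (c d : 'I_n) : (c < d)%N -> z c d = 0.
  by move=> cd; have := congr1 (fun M : 'M[F]_n => M c d) Uz; rewrite !mxE cd.
move=> c d; rewrite leq_eqVlt => /orP [/eqP/val_inj <-|]; last exact: zu.
apply: sqr0_trig_diag; last by apply/is_trig_mxP.
by rewrite conj_delta_sqr0 // neq_ltn ba orbT.
Qed.

End Conjugation.
End Nilpotency.

Theorem mainTheorem7 (F : closedFieldType) (n : nat)
    (G1 G2 : {set 'I_n}) (tau : 'I_n -> 'I_n) (R0 : 'M[F]_n) :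
  [pchar F] =i pred0 ->
  (1 < n)%N ->
  admissible G1 G2 tau ->
  r0_ok G1 tau R0 ->
  forall X : 'M[F]_n, Cstab (rBD G1 tau R0) X -> is_diag_mx X.
Proof.
move=> _ _ [_ _ _ _ tau_exits] _ X [Xu HX].
have [K0 tau_exit] := tau_exit_bound tau_exits.
have ZX : invmx X *m X = 1 by rewrite mulVmx.
have XZ : X *m invmx X = 1 by rewrite mulmxV.
have [conjX conjZ] := contract_conj Xu HX.
have upper : is_trig_mx X^T.
  exact: normaliser_nplus_upper ZX (conj_nplus tau_exit ZX conjX).
have lower : is_trig_mx X.
  exact: normaliser_nminus_lower XZ (conj_nminus tau_exit XZ conjZ).
by rewrite is_diag_mxEtrig lower upper.
Qed.
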